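(* ODH is population monotonic. Fix a strict priority order on $\mathcal C$ used to break all ties in ODH. Let $\sigma=\langle\mathcal V,\mathcal C,S,B\rangle$ be an approval-based multi-winner election and let $\emptyset\neq\mathcal G\subseteq\mathrm{ODH}(\sigma)$. 1. Let $\mathcal A\subseteq\mathcal C$ satisfy $\mathcal G\cap\mathcal A=\emptyset$ and $B(\mathcal A)\ge1$. Let $\sigma_1=\langle\mathcal V_1,\mathcal C,S,B_1\rangle$ be given by: $|\mathcal V_1|=|\mathcal V|$, $B_1(\mathcal A)=B(\mathcal A)-1$, $B_1(\mathcal A\cup\mathcal G)=B(\mathcal A\cup\mathcal G)+1$, and $B_1(\mathcal X)=B(\mathcal X)$ for all other $\mathcal X\subseteq\mathcal C$. Then $\mathcal G\cap\mathrm{ODH}(\sigma_1)\neq\emptyset$. 2. Let $\sigma_2=\langle\mathcal V_2,\mathcal C,S,B_2\rangle$ be given by: $|\mathcal V_2|=|\mathcal V|+1$, $B_2(\mathcal G)=B(\mathcal G)+1$, and $B_2(\mathcal X)=B(\mathcal X)$ for all $\mathcal X\neq\mathcal G$. Then $\mathcal G\cap\mathrm{ODH}(\sigma_2)\neq\emptyset$.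
   Context: An approval-based multi-winner election is a tuple $\sigma=\langle \mathcal V,\mathcal C,S,B\rangle$, where $\mathcal V$ is a finite set of agents, $\mathcal C$ is a finite set of candidates, $1\le S\le|\mathcal C|$ is an integer, and $B:2^{\mathcal C}\to\mathbb N$ gives, for each $\mathcal A\subseteq\mathcal C$, the number $B(\mathcal A)$ of agents whose ballot is exactly $\mathcal A$ (with $\sum_{\mathcal A}B(\mathcal A)\le|\mathcal V|$). For a non-empty $\mathcal A\subseteq\mathcal C$, the family $\mathfrak F_{\sigma,\mathcal A}$ is the set of all $F:2^{\mathcal C}\times\mathcal A\to\mathbb R$ such that: - $F(y,c)\ge0$ for all $y$ and $c$; - $F(y,c)=0$ if $c\notin y$; - $\sum_{c\in\mathcal A\cap y}F(y,c)=B(y)$ whenever $y\cap\mathcal A\neq\emptyset$. We write $\mathrm{Supp}_F(c)=\sum_yF(y,c)$ and $\mathrm{maxMin}(\sigma,\mathcal A)=\sup_{F\in\mathfrak F_{\sigma,\mathcal A}}\min_{c\in\mathcal A}\mathrm{Supp}_F(c)$. We also write $\mathfrak F^{\mathrm{opt}}_{\sigma,\mathcal A}=\{F\in\mathfrak F_{\sigma,\mathcal A}:\mathrm{Supp}_F(c)\ge\mathrm{maxMin}(\sigma,\mathcal A)\ \forall c\in\mathcal A\}$. The Open D'Hondt (ODH) rule proceeds as follows. Start with $\mathcal C_e=\emptyset$ and repeat $S$ times: - for each $c\in\mathcal C\setminus\mathcal C_e$, choose any $F\in\mathfrak F^{\mathrm{opt}}_{\sigma,\mathcal C_e\cup\{c\}}$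 and set $s_c=\mathrm{Supp}_F(c)$ (this value equals $\mathrm{maxMin}(\sigma,\mathcal C_e\cup\{c\})$); - then add to $\mathcal C_e$ a candidate $w\in\mathcal C\setminus\mathcal C_e$ with maximal $s_w$, breaking ties by the fixed priority order. The output $\mathcal C_e$ is denoted $\mathrm{ODH}(\sigma)$. *)

From Stdlib Require Import Reals ClassicalEpsilon.
From mathcomp Require Import all_boot.
Set Implicit Arguments. Unset Strict Implicit. Unset Printing Implicit Defensive.

Section ODH.
Variable C : finType.

(* An approval-based multi-winner election <V, C, S, B>: the set of agents is
   represented by its size nV, ballots are counted by B. *)
Record election := Election {
  nV : nat;
  seats : nat;
  ballots : {set C} -> nat
}.

Definition wf_election (s : election) : Prop :=
  (1 <= seats s)%N /\ (seats s <= #|C|)%N /\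
  (\sum_(X : {set C}) ballots s X <= nV s)%N.

(* The family F_{sigma,A} (F given as a total function; only values at
   candidates in A matter). *)
Definition in_family (s : election) (A : {set C}) (F : {set C} -> C -> R) : Prop :=
  (forall (y : {set C}) c, c \in A -> Rle 0 (F y c)) /\
  (forall (y : {set C}) c, c \in A -> c \notin y -> F y c = R0) /\
  (forall y : {set C}, A :&: y != set0 ->
     \big[Rplus/R0]_(c in A :&: y) F y c = INR (ballots s y)).

Definition Supp (F : {set C} -> C -> R) (c : C) : R :=
  \big[Rplus/R0]_(y : {set C}) F y c.

Definition is_min_on (f : C -> R) (A : {set C}) (v : R) : Prop :=
  (exists c, c \in A /\ v = f c) /\ (forall c, c \in A -> Rle v (f c)).

Definition minSupps (s : election) (A : {set C}) : R -> Prop :=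
  fun v => exists F, in_family s A F /\ is_min_on (Supp F) A v.

Definition maxMin (s : election) (A : {set C}) : R :=
  epsilon (inhabits R0) (fun v => is_lub (minSupps s A) v).

Definition Rleb (x y : R) : bool := if Rle_dec x y then true else false.
Definition Reqb (x y : R) : bool := if Req_EM_T x y then true else false.

(* One ODH round: score s_c = maxMin(sigma, Ce ∪ {c}); pick a remaining
   candidate with maximal score, ties broken by priority [prio]
   (smaller prio value = higher priority). *)
Definition odh_score (s : election) (Ce : {set C}) (c : C) : R :=
  maxMin s (c |: Ce).

Definition odh_step (prio : C -> nat) (s : election) (Ce : {set C}) : {set C} :=
  match [pick w | (w \notin Ce) &&
           [forall c, (c \notin Ce) ==>
              (Rleb (odh_score s Ce c) (odh_score s Ce w) &&
               (Reqb (odh_score s Ce c) (odh_score s Ce w) ==> (prio w <= prio c)%N))]]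
  with
  | Some w => w |: Ce
  | None => Ce
  end.

Definition ODH (prio : C -> nat) (s : election) : {set C} :=
  iter (seats s) (odh_step prio s) set0.

Definition move_ballot (s : election) (A G : {set C}) : election :=
  Election (nV s) (seats s)
    (fun X => if X == A then (ballots s A - 1)%N
              else if X == A :|: G then (ballots s X + 1)%N
              else ballots s X).

Definition add_ballot (s : election) (G : {set C}) : election :=
  Election (nV s).+1 (seats s)
    (fun X => if X == G then (ballots s G + 1)%N else ballots s X).

End ODH.

From Stdlib Require Import Reals ClassicalEpsilon Lra.
From HB Require Import structures.
From mathcomp Require Import all_boot.
Set Implicit Arguments. Unset Strict Implicit. Unset Printing Implicit Defensive.

(* Moving a voter from [A] to [A ∪ G], or adding a voter with ballot [G], never
   lowers maxMin: every flow of the old election can be rerouted into a flow of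
   the new one with supports at least as large.  On committees disjoint from [G]
   maxMin does not change at all, since there the changed ballots reach the same
   candidates as before.  So while the new ODH run has elected nobody from [G],
   its winner of each round scores as in the old run, the old winner scores at
   least as well as before, both tie and the common priority picks the same
   candidate.  The new run would thus reproduce the old outcome, which contains
   [G]. *)

Local Open Scope R_scope.

HB.instance Definition _ := Monoid.isComLaw.Build R R0 Rplus
  (fun x y z => esym (Rplus_assoc x y z)) Rplus_comm Rplus_0_l.

Section RealSums.
Variable I : finType.
Implicit Types (P : pred I) (F : I -> R).

Lemma Rsum_le P F1 F2 : (forall i, P i -> F1 i <= F2 i) ->
  \big[Rplus/R0]_(i | P i) F1 i <= \big[Rplus/R0]_(i | P i) F2 i.
Proof.
move=> le12; apply: (big_ind2 Rle); [lra | move=> *; lra | exact: le12].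
Qed.

Lemma Rsum_ge0 P F : (forall i, P i -> 0 <= F i) -> 0 <= \big[Rplus/R0]_(i | P i) F i.
Proof. by move=> F_ge0; apply: (big_ind (Rle 0)); [lra | move=> *; lra | ]. Qed.

Lemma Rsum_mulr P F k :
  \big[Rplus/R0]_(i | P i) (F i * k) = (\big[Rplus/R0]_(i | P i) F i) * k.
Proof. by apply: (big_rec2 (fun x y => x = y * k)) => [|i x y _ ->]; lra. Qed.

Lemma Rsum_ge_term P F j : (forall i, P i -> 0 <= F i) -> P j ->
  F j <= \big[Rplus/R0]_(i | P i) F i.
Proof.
move=> F_ge0 Pj; rewrite (bigD1 j) //=.
have : 0 <= \big[Rplus/R0]_(i | P i && (i != j)) F i.
  by apply: Rsum_ge0 => i /andP[/F_ge0].
lra.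
Qed.

End RealSums.

Lemma exists_argmax_seq (T : eqType) (s : seq T) (g : T -> R) (key : T -> nat) :
  s != [::] -> exists2 w, w \in s & forall c, c \in s ->
    g c <= g w /\ (g c = g w -> (key w <= key c)%N).
Proof.
elim: s => [//|x s IH] _.
have [->|/IH[w ws w_max]] := eqVneq s [::].
  by exists x => [|c]; rewrite ?mem_seq1 // => /eqP->; split; [lra|].
have [lt_xw|le_wx] := Rlt_le_dec (g x) (g w).
  exists w => [|c]; first by rewrite inE ws orbT.
  by rewrite inE => /orP[/eqP->|/w_max//]; split=> [|E]; lra.
have [lt_wx|le_xw] := Rlt_le_dec (g w) (g x); last first.
  have [key_xw|key_wx] := leqP (key x) (key w).
    exists x => [|c]; first by rewrite inE eqxx.
    rewrite inE => /orP[/eqP->|/w_max[le_cw eq_cw]]; first by split; [lra|].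
    by split=> [|E]; [lra | apply: leq_trans key_xw (eq_cw _); lra].
  exists w => [|c]; first by rewrite inE ws orbT.
  by rewrite inE => /orP[/eqP->|/w_max//]; split=> [|_]; [lra | apply: ltnW].
exists x => [|c]; first by rewrite inE eqxx.
rewrite inE => /orP[/eqP->|/w_max[le_cw _]]; first by split; [lra|].
by split=> [|E]; lra.
Qed.

Lemma exists_argmax (T : finType) (X : {set T}) (g : T -> R) (key : T -> nat) :
  X != set0 -> exists2 w, w \in X & forall c, c \in X ->
    g c <= g w /\ (g c = g w -> (key w <= key c)%N).
Proof.
move=> /set0Pn[x Xx].
have [|w] := exists_argmax_seq g key (s := enum X).
  by apply/eqP => eX; move: (mem_enum X x); rewrite eX Xx.
by rewrite mem_enum => Xw w_max; exists w => // c; rewrite -mem_enum; apply: w_max.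
Qed.

Lemma exists_argmin (T : finType) (X : {set T}) (g : T -> R) :
  X != set0 -> exists2 w, w \in X & forall c, c \in X -> g w <= g c.
Proof.
move=> /(exists_argmax (fun c => - g c) (fun _ => 0%N))[w Xw w_min].
by exists w => // c /w_min[le_wc _]; lra.
Qed.

Section Flows.
Variable C : finType.
Implicit Types (s : election C) (X y : {set C}) (F : {set C} -> C -> R).

Lemma family_le_ballots s X F y c : in_family s X F -> c \in X ->
  F y c <= INR (ballots s y).
Proof.
move=> [F_ge0 [F_out F_sum]] Xc.
have [yc|ync] := boolP (c \in y); last by rewrite F_out //; apply: pos_INR.
have Xy : X :&: y != set0 by apply/set0Pn; exists c; rewrite inE Xc yc.
rewrite -(F_sum _ Xy); apply: Rsum_ge_term; last by rewrite inE Xc yc.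
by move=> i /setIP[/F_ge0].
Qed.

Lemma family_sum s X F y : in_family s X F ->
  \big[Rplus/R0]_(c in X :&: y) F y c = \big[Rplus/R0]_(c in X) F y c.
Proof.
move=> [_ [F_out _]].
rewrite (bigID (mem y) (mem X)) /= [E in _ = _ + E]big1 ?Rplus_0_r.
  by apply: eq_bigl => c; rewrite inE.
by move=> c /andP[Xc /F_out->].
Qed.

Definition pick_flow X (w : {set C} -> nat) y c : R :=
  if [pick d in X :&: y] is Some d then (if c == d then INR (w y) else 0) else 0.

Lemma pick_flow_ge0 X w y c : 0 <= pick_flow X w y c.
Proof.
rewrite /pick_flow; case: pickP => [d _|_]; last lra.
by case: eqP => _; [apply: pos_INR | lra].
Qed.

Lemma pick_flow_out X w y c : c \notin y -> pick_flow X w y c = 0.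
Proof.
rewrite /pick_flow => nyc; case: pickP => [d /setIP[_ yd]|//].
by case: eqP => // cd; move: nyc; rewrite cd yd.
Qed.

Lemma pick_flow_sum X w y : X :&: y != set0 ->
  \big[Rplus/R0]_(c in X :&: y) pick_flow X w y c = INR (w y).
Proof.
move=> /set0Pn[x Xyx]; rewrite /pick_flow; case: pickP => [d Xyd|/(_ x)]; last by rewrite Xyx.
rewrite (bigD1 d) //= eqxx big1 ?Rplus_0_r //.
by move=> c /andP[_ /negbTE->].
Qed.

Lemma pick_flow_family s X : in_family s X (pick_flow X (ballots s)).
Proof.
split; [|split] => *; [exact: pick_flow_ge0 | exact: pick_flow_out | exact: pick_flow_sum].
Qed.

Lemma maxMin_is_lub s X : X != set0 -> is_lub (minSupps s X) (maxMin s X).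
Proof.
move=> X0; apply: epsilon_spec.
have bounded : bound (minSupps s X).
  exists (\big[Rplus/R0]_(y : {set C}) INR (ballots s y)).
  move=> v [F [famF [[c [Xc ->]] _]]].
  by apply: Rsum_le => y _; apply: family_le_ballots famF Xc.
have inhabited : exists v, minSupps s X v.
  have [c Xc c_min] := exists_argmin (Supp (pick_flow X (ballots s))) X0.
  exists (Supp (pick_flow X (ballots s)) c), (pick_flow X (ballots s)).
  by split; [exact: pick_flow_family | split; [exists c | ]].
by have [m lub_m] := completeness _ bounded inhabited; exists m.
Qed.

Lemma maxMin_le_dominated s s' X : X != set0 ->
  (forall F, in_family s X F -> exists2 F', in_family s' X F' &
     forall c, c \in X -> Supp F c <= Supp F' c) ->
  maxMin s X <= maxMin s' X.
Proof.
move=> X0 dominated; apply: (proj2 (maxMin_is_lub s X0)).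
move=> v [F [famF [[c [Xc ->]] F_min]]].
have [F' famF' le_FF'] := dominated F famF.
have [c' Xc' c'_min] := exists_argmin (Supp F') X0.
have : Supp F' c' <= maxMin s' X.
  by apply: (proj1 (maxMin_is_lub s' X0)); exists F'; split; [|split; [exists c'|]].
have := le_FF' _ Xc'; have := F_min _ Xc'; lra.
Qed.

Lemma maxMin_le_ballots s s' X : X != set0 ->
  (forall y, X :&: y != set0 -> (ballots s y <= ballots s' y)%N) ->
  maxMin s X <= maxMin s' X.
Proof.
move=> X0 le_ss'; apply: maxMin_le_dominated => // F [F_ge0 [F_out F_sum]].
pose extra := pick_flow X (fun y => ballots s' y - ballots s y)%N.
have extra_ge0 y c : 0 <= extra y c by apply: pick_flow_ge0.
exists (fun y c => F y c + extra y c); [split; [|split] |].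
- by move=> y c Xc; have := F_ge0 y c Xc; have := extra_ge0 y c; lra.
- by move=> y c Xc nyc; rewrite F_out // /extra pick_flow_out // Rplus_0_l.
- move=> y Xy; rewrite big_split /= F_sum // /extra pick_flow_sum // minus_INR; first lra.
  exact/leP/le_ss'.
- by move=> c _; apply: Rsum_le => y _; have := extra_ge0 y c; lra.
Qed.

(* When one of the [n] voters of ballot [a] switches to [b], her [1/n] share of
   [a]'s flow can follow her, because every candidate of [X] approved in [a] is
   also approved in [b]. *)
Definition transfer_flow (a b : {set C}) (n : nat) F y c : R :=
  if y == a then F a c * (1 - / INR n)
  else if y == b then F b c + F a c * / INR n
  else F y c.

Lemma Supp_transfer_flow a b n F c : a != b ->
  Supp (transfer_flow a b n F) c = Supp F c.
Proof.
move=> ab; have split_ab (g : {set C} -> R) : \big[Rplus/R0]_y g y =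
    g a + g b + \big[Rplus/R0]_(y | (y != a) && (y != b)) g y.
  by rewrite (bigD1 a) // (bigD1 b) 1?eq_sym //= Rplus_assoc.
rewrite /Supp !split_ab /transfer_flow eqxx eq_sym (negbTE ab) eqxx.
have -> : forall x y z : R, x * (1 - y) + (z + x * y) = x + z by move=> *; ring.
by congr (_ + _); apply: eq_bigr => y /andP[/negbTE-> /negbTE->].
Qed.

Section Transfer.
Variables (s s' : election C) (X a b : {set C}).
Hypotheses (ab : a != b) (Xa : X :&: a != set0) (Xab : X :&: a \subset b).
Hypotheses (s'_a : ballots s a = (ballots s' a).+1)
  (s'_b : ballots s' b = (ballots s b).+1)
  (s'_other : forall y, y != a -> y != b -> ballots s' y = ballots s y).

Lemma transfer_flow_family F : in_family s X F ->
  in_family s' X (transfer_flow a b (ballots s a) F).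
Proof.
move=> famF; have [F_ge0 [F_out F_sum]] := famF.
have n_ge1 : 1 <= INR (ballots s a).
  by rewrite s'_a S_INR; have := pos_INR (ballots s' a); lra.
have inv_le1 : / INR (ballots s a) <= 1 by rewrite -Rinv_1; apply: Rinv_le_contravar; lra.
have inv_ge0 : 0 <= / INR (ballots s a) by apply/Rlt_le/Rinv_0_lt_compat; lra.
have Fa_out c : c \in X -> c \notin b -> F a c = 0.
  move=> Xc nbc; apply: F_out => //; apply: contra nbc => ac.
  by apply: (subsetP Xab); rewrite inE Xc.
have Fa_sum : \big[Rplus/R0]_(c in X :&: b) F a c = INR (ballots s a).
  rewrite -(F_sum _ Xa) (family_sum a famF) [RHS](bigID (mem b)) /=.
  rewrite [E in _ = _ + E]big1 => [|c /andP[/Fa_out]//].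
  by rewrite Rplus_0_r; apply: eq_bigl => c; rewrite inE.
split; [|split]; rewrite /transfer_flow.
- move=> y c Xc; have := F_ge0 y c Xc; have Fa := F_ge0 a c Xc; have Fb := F_ge0 b c Xc.
  case: eqP => _ ?; first by apply: Rmult_le_pos; lra.
  by case: eqP => _; [have := Rmult_le_pos _ _ Fa inv_ge0; lra | lra].
- move=> y c Xc nyc; case: eqP => [ya|_]; first by subst y; rewrite F_out // Rmult_0_l.
  case: eqP => [yb|_]; last exact: F_out.
  by subst y; rewrite F_out ?Fa_out // Rmult_0_l Rplus_0_l.
- move=> y Xy; case: eqP => [->|/eqP ya].
    by rewrite Rsum_mulr F_sum // s'_a S_INR; field; rewrite -S_INR -s'_a; lra.
  case: eqP => [yb|/eqP yb]; last by rewrite F_sum // s'_other.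
  by subst y; rewrite big_split /= Rsum_mulr F_sum // Fa_sum s'_b S_INR Rinv_r; lra.
Qed.

Lemma maxMin_le_transfer : maxMin s X <= maxMin s' X.
Proof.
have X0 : X != set0 by apply: contraNneq Xa => ->; rewrite set0I.
apply: maxMin_le_dominated => // F famF.
exists (transfer_flow a b (ballots s a) F); first exact: transfer_flow_family.
by move=> c _; rewrite Supp_transfer_flow //; lra.
Qed.

End Transfer.

Lemma maxMin_le_move s s' X a b : X != set0 -> a != b -> X :&: a \subset b ->
  ballots s a = (ballots s' a).+1 -> ballots s' b = (ballots s b).+1 ->
  (forall y, y != a -> y != b -> ballots s' y = ballots s y) ->
  maxMin s X <= maxMin s' X.
Proof.
move=> X0 ab Xab s'_a s'_b s'_other.
have [Xa|/negPn/eqP Xa0] := boolP (X :&: a != set0).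
  exact: (maxMin_le_transfer ab Xa Xab s'_a s'_b s'_other).
apply: maxMin_le_ballots => // y Xy.
have ya : y != a by apply: contraNneq Xy => ->; rewrite Xa0.
by have [->|yb] := eqVneq y b; [rewrite s'_b | rewrite s'_other].
Qed.

End Flows.

Lemma RlebP x y : reflect (x <= y) (Rleb x y).
Proof. by rewrite /Rleb; case: Rle_dec => ?; constructor. Qed.

Lemma ReqbP x y : reflect (x = y) (Reqb x y).
Proof. by rewrite /Reqb; case: Req_EM_T => ?; constructor. Qed.

Section ODHRun.
Variables (C : finType) (prio : C -> nat).
Hypothesis prio_inj : injective prio.
Implicit Types (s : election C) (Ce : {set C}).

Definition odh_winner s Ce w : Prop :=
  w \notin Ce /\ forall c, c \notin Ce ->
    odh_score s Ce c <= odh_score s Ce w /\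
    (odh_score s Ce c = odh_score s Ce w -> (prio w <= prio c)%N).

Lemma odh_stepP s Ce : Ce != setT ->
  exists2 w, odh_step prio s Ce = w |: Ce & odh_winner s Ce w.
Proof.
move=> CeT; rewrite /odh_step; case: pickP => [w /andP[nCew /forallP w_best]|no_winner].
  exists w => //; split=> // c nCec.
  by move: (w_best c); rewrite nCec => /andP[/RlebP le_cw /implyP eq_cw]; split=> // /ReqbP.
have [|w] := exists_argmax (odh_score s Ce) prio (X := ~: Ce).
  by apply: contraNneq CeT => CeC0; rewrite -[Ce]setCK CeC0 setC0.
rewrite inE => nCew w_best; case/negP: (negbT (no_winner w)); rewrite nCew /=.
apply/forallP => c; apply/implyP => nCec.
have /w_best[le_cw eq_cw] : c \in ~: Ce by rewrite inE.
by apply/andP; split; [apply/RlebP | apply/implyP => /ReqbP].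
Qed.

Lemma odh_step_setT s : odh_step prio s setT = setT.
Proof. by rewrite /odh_step; case: pickP => [w /andP[]|//]; rewrite inE. Qed.

Lemma odh_step_sup s Ce : Ce \subset odh_step prio s Ce.
Proof. by rewrite /odh_step; case: pickP => [w _|_]; [apply: subsetUr | apply: subxx]. Qed.

(* [w] scores at least as well under [s'] as under [s], while [w'] scores the
   same: so [w] and [w'] tie in both elections and the priority decides. *)
Lemma odh_winner_eq s s' Ce w w' : odh_winner s Ce w -> odh_winner s' Ce w' ->
  odh_score s' Ce w' = odh_score s Ce w' -> odh_score s Ce w <= odh_score s' Ce w ->
  w = w'.
Proof.
move=> [nCew w_best] [nCew' w'_best] eq_w' le_w.
have [le_w'w prio_ww'] := w_best w' nCew'.
have [le_ww' prio_w'w] := w'_best w nCew.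
by apply: prio_inj; apply/eqP; rewrite eqn_leq prio_ww' ?prio_w'w //; lra.
Qed.

Lemma iter_odh_step_eq s s' G :
  (forall X, X != set0 -> X :&: G = set0 -> maxMin s' X = maxMin s X) ->
  (forall X, X != set0 -> maxMin s X <= maxMin s' X) ->
  forall n, G :&: iter n (odh_step prio s') set0 = set0 ->
    iter n (odh_step prio s') set0 = iter n (odh_step prio s) set0.
Proof.
move=> eq_offG le_ss'; elim=> [//|n IH]; rewrite !iterS => G_out.
have /IH IHn : G :&: iter n (odh_step prio s') set0 = set0.
  apply/eqP; rewrite -subset0; apply: subset_trans (setIS G (odh_step_sup s' _)) _.
  by rewrite G_out.
rewrite IHn in G_out *; set Ce := iter n (odh_step prio s) set0 in G_out *.
have [->|CeT] := eqVneq Ce setT; first by rewrite !odh_step_setT.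
have [w' Ce_w' win'] := odh_stepP s' CeT; have [w Ce_w win] := odh_stepP s CeT.
rewrite Ce_w' Ce_w in G_out *; congr (_ |: Ce); apply: esym.
have nonempty x : x |: Ce != set0 by apply/set0Pn; exists x; apply: setU11.
by apply: (odh_winner_eq win win'); [apply: eq_offG; rewrite // setIC | apply: le_ss'].
Qed.

Lemma ODH_meets s s' G : seats s' = seats s -> G != set0 -> G \subset ODH prio s ->
  (forall X, X != set0 -> X :&: G = set0 -> maxMin s' X = maxMin s X) ->
  (forall X, X != set0 -> maxMin s X <= maxMin s' X) ->
  G :&: ODH prio s' != set0.
Proof.
move=> seats_eq G0 G_sub eq_offG le_ss'; apply: contraNneq G0 => G_out.
have := iter_odh_step_eq eq_offG le_ss' G_out.
rewrite /ODH seats_eq -/(ODH prio s) => ODH_eq.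
by rewrite -G_out /ODH seats_eq ODH_eq (setIidPl G_sub).
Qed.

End ODHRun.

Section BallotChanges.
Variables (C : finType) (s : election C) (G : {set C}).
Implicit Types (X : {set C}).

Lemma maxMin_add_ballot_ge X : X != set0 -> maxMin s X <= maxMin (add_ballot s G) X.
Proof.
move=> X0; apply: maxMin_le_ballots => // y _ /=.
by case: eqP => [->|//]; rewrite addn1.
Qed.

Lemma maxMin_add_ballot_eq X : X != set0 -> X :&: G = set0 ->
  maxMin (add_ballot s G) X = maxMin s X.
Proof.
move=> X0 XG; apply: Rle_antisym; last exact: maxMin_add_ballot_ge.
apply: maxMin_le_ballots => // y Xy /=.
by case: eqP => // yG; move: Xy; rewrite yG XG eqxx.
Qed.

Variable A : {set C}.
Hypotheses (G0 : G != set0) (GA : G :&: A = set0) (A1 : (1 <= ballots s A)%N).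

Let A_neq_AG : A != A :|: G.
Proof.
apply: contraNneq G0 => AG; apply/eqP; rewrite -GA; apply/esym/setIidPl.
by rewrite AG subsetUr.
Qed.

Lemma maxMin_move_ballot_ge X : X != set0 ->
  maxMin s X <= maxMin (move_ballot s A G) X.
Proof.
move=> X0; apply: (maxMin_le_move (a := A) (b := A :|: G)) => //=.
- by rewrite subIset // subsetUl orbT.
- by rewrite eqxx subn1 prednK.
- by rewrite eq_sym (negbTE A_neq_AG) eqxx addn1.
- by move=> y /negbTE-> /negbTE->.
Qed.

Lemma maxMin_move_ballot_eq X : X != set0 -> X :&: G = set0 ->
  maxMin (move_ballot s A G) X = maxMin s X.
Proof.
move=> X0 XG; apply: Rle_antisym; last exact: maxMin_move_ballot_ge.
apply: (maxMin_le_move (a := A :|: G) (b := A)) => //=.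
- by rewrite eq_sym.
- by rewrite setIUr XG setU0 subsetIr.
- by rewrite eq_sym (negbTE A_neq_AG) eqxx addn1.
- by rewrite eqxx subn1 prednK.
- by move=> y /negbTE yAG /negbTE yA; rewrite yA yAG.
Qed.

End BallotChanges.

Theorem theorem6 (C : finType) (prio : C -> nat) (prio_inj : injective prio)
  (s : election C) (Hwf : wf_election s)
  (G : {set C}) (HG0 : G != set0) (HGsub : G \subset ODH prio s) :
  (forall A : {set C}, G :&: A = set0 -> (1 <= ballots s A)%N ->
     G :&: ODH prio (move_ballot s A G) != set0)
  /\
  G :&: ODH prio (add_ballot s G) != set0.
Proof.
split=> [A GA A1|]; apply: (ODH_meets prio_inj _ HG0 HGsub) => // X X0.
- exact: maxMin_move_ballot_eq.
- exact: maxMin_move_ballot_ge.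
- exact: maxMin_add_ballot_eq.
- exact: maxMin_add_ballot_ge.
Qed.
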